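(* Let $m\ge1$, $0<x_1<x_2<\cdots<x_m<1$, and let $k_0\ge0$, $k_1\ge0$ with $k_0+k_1>0$. Define $G:[0,1]\times[0,1]\to\mathbb{R}$ by $$G(x,\zeta)=\begin{cases}\dfrac{(k_1\zeta-k_1-1)(k_0x+1)}{k_0+k_1+k_0k_1}, & 0\le x<\zeta,\\[2mm] \dfrac{(k_1x-k_1-1)(k_0\zeta+1)}{k_0+k_1+k_0k_1}, & \zeta\le x\le 1.\end{cases}$$ Then the $m\times m$ matrix $\big(G(x_i,x_j)\big)_{i,j=1}^m$ is invertible.
   Context: $G$ is the Green's function of the steady-state problem $\bar z_{xx}=f$ on $(0,1)$ with $\bar z_x(0)-k_0\bar z(0)=0$, $\bar z_x(1)+k_1\bar z(1)=0$. *)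

From HB Require Import structures.
From mathcomp Require Import all_boot all_order all_algebra.
From mathcomp Require Import reals.
Set Implicit Arguments. Unset Strict Implicit. Unset Printing Implicit Defensive.
Import Order.TTheory GRing.Theory Num.Theory.
Local Open Scope ring_scope.

(* Green's function of z'' = f on (0,1), z'(0) - k0 z(0) = 0, z'(1) + k1 z(1) = 0. *)
Definition green (R : realType) (k0 k1 : R) (x zeta : R) : R :=
  if x < zeta then
    (k1 * zeta - k1 - 1) * (k0 * x + 1) / (k0 + k1 + k0 * k1)
  else
    (k1 * x - k1 - 1) * (k0 * zeta + 1) / (k0 + k1 + k0 * k1).

Definition green_mx (R : realType) (k0 k1 : R) (m : nat) (x : 'I_m -> R) : 'M[R]_m :=
  \matrix_(i < m, j < m) green k0 k1 (x i) (x j).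

From HB Require Import structures.
From mathcomp Require Import all_boot all_order all_algebra.
From mathcomp Require Import reals.
From mathcomp Require Import ring lra.
Import Order.TTheory GRing.Theory Num.Theory.
Local Open Scope ring_scope.

(* The Green's function is separable, G(x, z) = u(min x z) v(max x z) / D with
   u t = k0 t + 1, v t = k1 t - k1 - 1 and D = k0 + k1 + k0 k1, and the Wronskian
   u(b) v(a) - u(a) v(b) = (a - b) D never vanishes off the diagonal.  For such a
   matrix, subtracting from row i the multiple u_i / u_(i+1) of row i+1 kills
   everything right of the diagonal and leaves on it the Wronskians of
   consecutive points (times u_i / u_(i+1)) and, in the last row, u_m v_m; these
   are nonzero because u > 0 and v < 0 on [0, 1]. *)

Definition semisep_mx {F : pzRingType} {n : nat} (u v : 'I_n -> F) : 'M[F]_n :=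
  \matrix_(i, j) if (i <= j)%N then u i * v j else u j * v i.

Section SemiseparableMatrix.

Variables (F : fieldType) (n : nat) (u v : 'I_n.+1 -> F).

Definition semisep_elim_mx : 'M[F]_n.+1 :=
  1 - \matrix_(i, j) if j == i.+1 :> nat then u i / u j else 0.

Lemma det_semisep_elim_mx : \det semisep_elim_mx = 1.
Proof.
rewrite -det_tr det_trig; last first.
  apply/is_trig_mxP => i j lt_ij; rewrite !mxE.
  rewrite (_ : j == i = false) ?ifF ?subr0 //; apply/eqP => eq_j.
    by rewrite eq_j ltnNge leqnSn in lt_ij.
  by rewrite eq_j ltnn in lt_ij.
by apply: big1 => i _; rewrite !mxE eqxx (ltn_eqF (ltnSn i)) subr0.
Qed.

Lemma semisep_elim_mxE i j :
  (semisep_elim_mx *m semisep_mx u v) i j =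
  semisep_mx u v i j - if (i.+1 < n.+1)%N
    then u i / u (inord i.+1) * semisep_mx u v (inord i.+1) j else 0.
Proof.
rewrite mulmxBl mul1mx !mxE; congr (_ - _).
case: ifPn => [lt_in|ge_in]; last first.
  apply: big1 => k _; rewrite mxE; case: eqP => [eq_k|_]; last by rewrite mul0r.
  by rewrite -eq_k ltn_ord in ge_in.
rewrite (bigD1 (inord i.+1)) //= !mxE inordK // eqxx big1 ?addr0 // => k ne_k.
rewrite mxE; case: eqP => [eq_k|_]; last by rewrite mul0r.
by case/eqP: ne_k; apply: val_inj; rewrite /= inordK.
Qed.

Hypothesis u_neq0 : forall i, u i != 0.

Lemma semisep_elim_mx_trig : is_trig_mx (semisep_elim_mx *m semisep_mx u v).
Proof.
apply/is_trig_mxP => i j lt_ij; rewrite semisep_elim_mxE.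
have lt_in : (i.+1 < n.+1)%N by exact: leq_trans lt_ij (ltn_ord j).
rewrite lt_in !mxE inordK // (ltnW lt_ij) lt_ij mulrA divfK ?subrr //.
Qed.

Lemma semisep_elim_mx_diag i :
  (semisep_elim_mx *m semisep_mx u v) i i =
  if (i.+1 < n.+1)%N then
    u i / u (inord i.+1) * (u (inord i.+1) * v i - u i * v (inord i.+1))
  else u i * v i.
Proof.
rewrite semisep_elim_mxE !mxE leqnn; case: ifP => [lt_in|_]; last by rewrite subr0.
rewrite inordK // ltnn.
by field; rewrite u_neq0.
Qed.

Lemma semisep_mx_unit :
  v ord_max != 0 -> (forall i j : 'I_n.+1, (i < j)%N -> u j * v i != u i * v j) ->
  semisep_mx u v \in unitmx.
Proof.
move=> v_max_neq0 wronskian_neq0.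
rewrite unitmxE unitfE -[\det _]mul1r -det_semisep_elim_mx -det_mulmx.
rewrite det_trig ?semisep_elim_mx_trig // prodf_seq_neq0.
apply/allP => i _ /=; rewrite semisep_elim_mx_diag; case: ifP => [lt_in|ge_in].
  rewrite !mulf_neq0 ?invr_eq0 // subr_eq0 wronskian_neq0 //.
  by rewrite inordK.
have -> : i = ord_max.
  by apply/val_inj/eqP; rewrite eqn_leq -ltnS ltn_ord leqNgt -ltnS ge_in.
by rewrite mulf_neq0.
Qed.

End SemiseparableMatrix.

Lemma green_mx_semisep (R : realType) (n : nat) (x : 'I_n -> R) (k0 k1 : R) :
  (forall i j : 'I_n, (i < j)%N -> x i < x j) ->
  green_mx k0 k1 x = (k0 + k1 + k0 * k1)^-1 *:
    semisep_mx (fun i => k0 * x i + 1) (fun i => k1 * x i - k1 - 1).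
Proof.
move=> x_incr; apply/matrixP => i j; rewrite !mxE /green.
case: (ltngtP i j) => [lt_ij|lt_ji|/val_inj ->].
- by rewrite x_incr //; ring.
- by rewrite ltNge ltW ?x_incr //; ring.
- by rewrite ltxx; ring.
Qed.

Lemma green_wronskian (R : comPzRingType) (k0 k1 a b : R) :
  (k0 * b + 1) * (k1 * a - k1 - 1) - (k0 * a + 1) * (k1 * b - k1 - 1) =
  (a - b) * (k0 + k1 + k0 * k1).
Proof. by ring. Qed.

Theorem proposition2 (R : realType) (m : nat) (x : 'I_m -> R) (k0 k1 : R) :
  (1 <= m)%N ->
  (forall i : 'I_m, 0 < x i /\ x i < 1) ->
  (forall i j : 'I_m, (i < j)%N -> x i < x j) ->
  0 <= k0 -> 0 <= k1 -> 0 < k0 + k1 ->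
  green_mx k0 k1 x \in unitmx.
Proof.
case: m x => [|n] x // _ x_in01 x_incr k0_ge0 k1_ge0 k_gt0.
have D_gt0 : 0 < k0 + k1 + k0 * k1 by have := mulr_ge0 k0_ge0 k1_ge0; lra.
rewrite green_mx_semisep // unitmxZ ?unitfE ?invr_eq0 ?gt_eqF //.
apply: semisep_mx_unit => [i||i j lt_ij].
- have [x_gt0 _] := x_in01 i; have := mulr_ge0 k0_ge0 (ltW x_gt0).
  by apply: contraTN => /eqP; lra.
- have [_] := x_in01 ord_max; rewrite -subr_gt0 => x_lt1.
  have := mulr_ge0 k1_ge0 (ltW x_lt1).
  by apply: contraTN => /eqP; lra.
- rewrite -subr_eq0 green_wronskian mulf_neq0 ?(gt_eqF D_gt0) // subr_eq0.
  by rewrite lt_eqF ?x_incr.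
Qed.
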